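(* Fix $i\in[n]$ and $\mathbf{x}_{-i}\in\mathcal{C}_{-i}$, let $A=A(\mathbf{x}_{-i})$, $\mathcal{R}_A=\prod_{j\in A}(0,\omega_{ij}-\mathbf{x}_T^{j|i})$ and $\mathcal{V}_{\mathbf{x}_{-i}}((x_{ij})_{j\in A})=\sum_{j\in A}x_{ij}^{a_i}\mathcal{F}_{ij}(x_{ij}+\mathbf{x}_T^{j|i})$. Then the system of equations $\psi_{ij}(x_{ij};\mathbf{x}_T^{j|i})=0$, $j\in A$, has a unique solution in $\mathcal{R}_A$, and this solution is a global maximum of $\mathcal{V}_{\mathbf{x}_{-i}}$ on $\mathcal{R}_A$.
   Context: Fragile multi-CPR Game: $n,m\ge1$, $[k]=\{1,\dots,k\}$, $C_m=\{(x_1,\dots,x_m)\in[0,1]^m:\sum_j x_j\le1\}$, $\mathcal{C}_{-i}=\prod_{[n]\setminus\{i\}}C_m$; for $\mathbf{x}_{-i}=(\mathbf{x}_\ell)_{\ell\ne i}$ with $\mathbf{x}_\ell=(x_{\ell1},\dots,x_{\ell m})$ put $\mathbf{x}_T^{j|i}=\sum_{\ell\ne i}x_{\ell j}$. Each CPR $j$ has a return rate $\mathcal{R}_j(t)>1$ and failure probability $p_j(t)\in[0,1]$; each player $i$ has parameters $a_i,k_i$. Effective rate: $\mathcal{F}_{ij}(t)=(\mathcal{R}_j(t)-1)^{a_i}(1-p_j(t))-k_ip_j(t)$. Assumption: (1) $p_j(0)=0$, $p_j(t)=1$ for $t\ge1$; (2) $a_i\in(0,1]$, $k_i>0$; (3)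 each $\mathcal{F}_{ij}$ (continuous on $[0,1]$) has strictly negative first and second derivatives on $(0,1)$. Let $\omega_{ij}\in(0,1)$ be the unique zero of $\mathcal{F}_{ij}$ in $(0,1)$. Active CPRs: $A(\mathbf{x}_{-i})=\{j:\mathbf{x}_T^{j|i}<\omega_{ij}\}$. Define $\psi_{ij}(x;s)=x\,\mathcal{F}_{ij}'(x+s)+a_i\mathcal{F}_{ij}(x+s)$. *)

From mathcomp Require Import all_boot all_order all_algebra.
From mathcomp Require Import all_classical all_reals all_analysis.
Set Implicit Arguments. Unset Strict Implicit. Unset Printing Implicit Defensive.
Import Order.TTheory GRing.Theory Num.Theory numFieldNormedType.Exports.
Local Open Scope ring_scope.

Definition Feff {R : realType} (Rr p : R -> R) (a k : R) (t : R) : R :=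
  (Rr t - 1) `^ a * (1 - p t) - k * p t.

Definition psi {R : realType} (F : R -> R) (a x s : R) : R :=
  x * derive1 F (x + s) + a * F (x + s).

Definition xT {R : realType} (n m : nat) (x : 'I_n -> 'I_m -> R)
  (i : 'I_n) (j : 'I_m) : R := \sum_(l < n | l != i) x l j.

Definition inC {R : realType} (m : nat) (y : 'I_m -> R) : Prop :=
  (forall j, 0 <= y j <= 1) /\ \sum_(j < m) y j <= 1.

From mathcomp Require Import all_boot all_order all_algebra.
From mathcomp Require Import all_classical all_reals all_analysis.
From mathcomp Require Import ring lra.

(* Everything decouples over the active CPRs, so fix one and write F, a, s.
   As F' < 0 and F'' < 0, psi x = x F'(x+s) + a F(x+s) is strictly decreasing,
   positive near 0 and negative at omega - s: it has exactly one root y there.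
   At that root y F'(y+s) = -a F(y+s), so concavity gives, with t = z / y,
   F(z+s) <= F(y+s) (1 - a (t-1)); Bernoulli's inequality t^a <= 1 + a (t-1)
   and (1+u)(1-u) <= 1 then give z^a F(z+s) <= y^a F(y+s). *)

Set Implicit Arguments.
Unset Strict Implicit.
Unset Printing Implicit Defensive.
Import Order.TTheory GRing.Theory Num.Theory numFieldNormedType.Exports.
Local Open Scope classical_set_scope.
Local Open Scope ring_scope.

Section derivable_on_open_interval.
Context {R : realType} (f : R -> R) (l r : R).
Hypothesis fD : forall t : R, l < t < r -> derivable f t 1.

Lemma MVT_oo u v : l < u -> u < v -> v < r ->
  exists2 c, u < c < v & f v - f u = derive1 f c * (v - u).
Proof.
move=> lu uv vr.
have fD_uv x : u <= x <= v -> derivable f x 1.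
  by move=> /andP[ux xv]; apply: fD; apply/andP; split; lra.
have f'_uv x : x \in `]u, v[ -> is_derive x 1 f (derive1 f x).
  rewrite in_itv /= => /andP[ux xv]; rewrite derive1E; apply: derivableP.
  by apply: fD_uv; apply/andP; split; exact: ltW.
have [|c] := MVT uv f'_uv.
  by apply: derivable_within_continuous => x; rewrite in_itv /=; exact: fD_uv.
by rewrite in_itv /= => ucv ->; exists c.
Qed.

Lemma derivable_oo_continuous t : l < t < r -> {for t, continuous f}.
Proof.
by move=> ltr; apply/differentiable_continuous; rewrite -derivable1_diffP; exact: fD.
Qed.

Lemma derive1_lt0_decr_oo : (forall t, l < t < r -> derive1 f t < 0) ->
  forall u v, l < u -> u < v -> v < r -> f v < f u.
Proof.
move=> f'_lt0 u v lu uv vr; have [c /andP[uc cv] fvu] := MVT_oo lu uv vr.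
have : derive1 f c < 0 by apply: f'_lt0; apply/andP; split; lra.
by move=> f'c_lt0; rewrite -subr_lt0 fvu pmulr_llt0 // subr_gt0.
Qed.

Lemma derive1_nincr_tangent_le :
  (forall u v, l < u -> u < v -> v < r -> derive1 f v <= derive1 f u) ->
  forall u v, l < u < r -> l < v < r -> f u <= f v + derive1 f v * (u - v).
Proof.
move=> f'_nincr u v /andP[lu ur] /andP[lv vr].
have [uv|vu|->] := ltgtP u v; last by rewrite subrr mulr0 addr0.
- have [c /andP[uc cv] fvu] := MVT_oo lu uv vr.
  have : derive1 f v * (v - u) <= derive1 f c * (v - u).
    by rewrite ler_pM2r ?subr_gt0 //; apply: f'_nincr; lra.
  lra.
- have [c /andP[vc cu] fuv] := MVT_oo lv vu ur.
  have : derive1 f c * (u - v) <= derive1 f v * (u - v).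
    by rewrite ler_pM2r ?subr_gt0 //; apply: f'_nincr; lra.
  lra.
Qed.

End derivable_on_open_interval.

Section bernoulli_powR.
Context {R : realType} (a t : R).
Hypotheses (a_gt0 : 0 < a) (a_le1 : a <= 1) (t_ge0 : 0 <= t).

Lemma powR_le1Dx : t `^ a <= 1 + a * (t - 1).
Proof.
have [->|a_neq1] := eqVneq a 1; first by rewrite powRr1 //; lra.
have a_lt1 : a < 1 by rewrite lt_neqAle a_neq1.
(* Young's inequality for t^a and 1 with the conjugate exponents 1/a and 1/(1-a). *)
have := @conjugate_powR R (t `^ a) 1 a^-1 (1 - a)^-1 (powR_ge0 _ _) ler01.
rewrite !invr_gt0 a_gt0 subr_gt0 a_lt1 !invrK => /(_ isT isT).
rewrite -powRrM mulfV ?gt_eqF // powRr1 // powR1 mulr1 addrC subrK.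
by move=> /(_ erefl); lra.
Qed.

Lemma powR_mul1Bx_le1 : t `^ a * (1 - a * (t - 1)) <= 1.
Proof.
have [le0|gt0] := lerP (1 - a * (t - 1)) 0.
  by apply: le_trans ler01; rewrite mulr_ge0_le0 ?powR_ge0.
apply: le_trans (ler_wpM2r (ltW gt0) powR_le1Dx) _.
have : 0 <= (a * (t - 1)) ^+ 2 by exact: sqr_ge0.
lra.
Qed.

End bernoulli_powR.

Section psi_root.
Context {R : realType} (F : R -> R) (a s : R).
Hypothesis F'_lt0 : forall t : R, 0 < t < 1 -> derivable F t 1 /\ derive1 F t < 0.
Hypothesis F''_lt0 : forall t : R, 0 < t < 1 ->
  derivable (derive1 F) t 1 /\ derive1 (derive1 F) t < 0.

Let F_decr : forall u v : R, 0 < u -> u < v -> v < 1 -> F v < F u.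
Proof. by apply: derive1_lt0_decr_oo => t /F'_lt0[]. Qed.

Let F'_decr : forall u v : R, 0 < u -> u < v -> v < 1 -> derive1 F v < derive1 F u.
Proof. by apply: derive1_lt0_decr_oo => t /F''_lt0[]. Qed.

Lemma psi_continuous (x : R) : 0 < x + s < 1 -> {for x, continuous (psi F a ^~ s)}.
Proof.
move=> xs01; have shift_cont : {for x, continuous (fun x => x + s)}.
  by apply: continuousD; [exact: cvg_id | exact: cvg_cst].
apply: continuousD; apply: continuousM; [exact: cvg_id| | exact: cvg_cst|].
- apply: continuous_comp shift_cont _.
  by apply: derivable_oo_continuous xs01 => t /F''_lt0[].
- apply: continuous_comp shift_cont _.
  by apply: derivable_oo_continuous xs01 => t /F'_lt0[].
Qed.

Lemma psi_decr (x y : R) : 0 < a -> 0 <= s -> 0 < x -> x < y -> y + s < 1 ->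
  psi F a y s < psi F a x s.
Proof.
move=> a_gt0 s_ge0 x_gt0 xy ys1; rewrite /psi.
have F'_xs : derive1 F (x + s) < 0 by apply: (F'_lt0 _).2; apply/andP; split; lra.
have F'_ys : derive1 F (y + s) < derive1 F (x + s) by apply: F'_decr; lra.
have F_ys : a * F (y + s) < a * F (x + s) by rewrite ltr_pM2l //; apply: F_decr; lra.
have : y * derive1 F (y + s) < x * derive1 F (x + s).
  apply: lt_trans (_ : y * derive1 F (x + s) < _); first by rewrite ltr_pM2l //; lra.
  by rewrite ltr_nM2r.
lra.
Qed.

Lemma psi_inj (x y : R) : 0 < a -> 0 <= s -> 0 < x -> x + s < 1 -> 0 < y -> y + s < 1 ->
  psi F a x s = psi F a y s -> x = y.
Proof.
move=> a_gt0 s_ge0 x_gt0 xs1 y_gt0 ys1 psi_xy.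
have [xy|yx|//] := ltgtP x y.
- by have := psi_decr a_gt0 s_ge0 x_gt0 xy ys1; rewrite psi_xy ltxx.
- by have := psi_decr a_gt0 s_ge0 y_gt0 yx xs1; rewrite psi_xy ltxx.
Qed.

Lemma psi_root_argmax (y z : R) : 0 < a <= 1 -> 0 <= s ->
  0 < y -> y + s < 1 -> psi F a y s = 0 -> 0 < z -> z + s < 1 ->
  z `^ a * F (z + s) <= y `^ a * F (y + s).
Proof.
move=> /andP[a_gt0 a_le1] s_ge0 y_gt0 ys1 psi_y z_gt0 zs1.
rewrite /psi in psi_y; set B := F (y + s) in psi_y *; set D := derive1 F (y + s) in psi_y.
have B_gt0 : 0 < B.
  have : y * D < 0 by rewrite pmulr_rlt0 //; apply: (F'_lt0 _).2; apply/andP; split; lra.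
  by move=> yD_lt0; rewrite -(pmulr_rgt0 _ a_gt0); lra.
set t := z / y; have t_ge0 : 0 <= t by rewrite divr_ge0 ?ltW.
have z_ty : z = t * y by rewrite divfK ?gt_eqF.
have tangent : F (z + s) <= B * (1 - a * (t - 1)).
  have -> : B * (1 - a * (t - 1)) = B + D * (z + s - (y + s)).
    have aB : a * B = - (y * D) by lra.
    by rewrite mulrBr mulr1 mulrA [B * a]mulrC aB z_ty; ring.
  have F'_nincr u v : 0 < u -> u < v -> v < 1 -> derive1 F v <= derive1 F u.
    by move=> u_gt0 uv v1; apply/ltW/F'_decr.
  by apply: (derive1_nincr_tangent_le (fun t ht => (F'_lt0 ht).1) F'_nincr);
    apply/andP; split; lra.
rewrite {1}z_ty (@powRM _ t y a t_ge0 (ltW y_gt0)) mulrAC [_ * B]mulrC ler_pM2r ?powR_gt0 //.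
apply: le_trans (ler_wpM2l (powR_ge0 _ _) tangent) _.
by rewrite mulrCA ger_pMr // powR_mul1Bx_le1.
Qed.

Lemma psi_root_exists (w : R) : 0 < a -> 0 <= s -> s < w -> w < 1 -> F w = 0 ->
  exists2 y, 0 < y < w - s & psi F a y s = 0.
Proof.
move=> a_gt0 s_ge0 sw w1 Fw.
have F'w_lt0 : derive1 F w < 0 by apply: (F'_lt0 _).2; apply/andP; split; lra.
set c := (s + w) / 2; have F_c : 0 < F c by rewrite -Fw; apply: F_decr; rewrite /c; lra.
(* For x + s <= c, psi x > x F'(w) + a F(c), which is >= 0 once x <= a F(c) / -F'(w). *)
set x0 := Num.min ((c - s) / 2) (a * F c / - derive1 F w).
have x0_gt0 : 0 < x0.
  have : 0 < a * F c / - derive1 F w by rewrite divr_gt0 ?mulr_gt0 ?oppr_gt0.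
  by rewrite lt_min => ->; rewrite andbT /c; lra.
have x0_le : x0 <= (c - s) / 2 by rewrite ge_min lexx.
have x0_F'w : x0 * - derive1 F w <= a * F c.
  by rewrite -ler_pdivlMr ?oppr_gt0 // ge_min lexx orbT.
have psi_x0 : 0 < psi F a x0 s.
  have : x0 * derive1 F w < x0 * derive1 F (x0 + s).
    by rewrite ltr_pM2l //; apply: F'_decr; rewrite /c in x0_le *; lra.
  have : a * F c < a * F (x0 + s).
    by rewrite ltr_pM2l //; apply: F_decr; rewrite /c in x0_le *; lra.
  by rewrite /psi mulrN in x0_F'w *; lra.
have psi_ws : psi F a (w - s) s < 0.
  by rewrite /psi subrK Fw mulr0 addr0 pmulr_rlt0 // subr_gt0.
have x0_ws : x0 <= w - s by rewrite /c in x0_le; lra.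
have psi_cont : {within `[x0, w - s], continuous (psi F a ^~ s)}.
  apply: continuous_in_subspaceT => x; rewrite inE /= in_itv /= => /andP[x0x xws].
  by apply: psi_continuous; apply/andP; split; lra.
have psi_sign_change : Num.min (psi F a x0 s) (psi F a (w - s) s) <= 0 <=
    Num.max (psi F a x0 s) (psi F a (w - s) s).
  by rewrite ge_min le_max (ltW psi_ws) (ltW psi_x0) orbT.
have [y] := IVT x0_ws psi_cont psi_sign_change.
rewrite in_itv /= => /andP[x0y yws] psi_y; exists y => //.
apply/andP; split; first lra.
by rewrite lt_neqAle yws andbT; apply: contraTneq psi_ws => <-; rewrite psi_y ltxx.
Qed.

End psi_root.
Theorem lemma2 (R : realType) (n m : nat)
  (Rr p : 'I_m -> R -> R) (a k : 'I_n -> R) (omega : 'I_n -> 'I_m -> R)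
  (HR : forall j t, 0 <= t -> 1 < Rr j t)
  (Hp01 : forall j t, 0 <= t -> 0 <= p j t <= 1)
  (Hp0 : forall j, p j 0 = 0)
  (Hp1 : forall j t, 1 <= t -> p j t = 1)
  (Ha : forall i, 0 < a i <= 1)
  (Hk : forall i, 0 < k i)
  (Hcont : forall i j,
     {within `[0, 1], continuous (Feff (Rr j) (p j) (a i) (k i))})
  (Hd1 : forall i j t, 0 < t < 1 ->
     derivable (Feff (Rr j) (p j) (a i) (k i)) t 1 /\
     derive1 (Feff (Rr j) (p j) (a i) (k i)) t < 0)
  (Hd2 : forall i j t, 0 < t < 1 ->
     derivable (derive1 (Feff (Rr j) (p j) (a i) (k i))) t 1 /\
     derive1 (derive1 (Feff (Rr j) (p j) (a i) (k i))) t < 0)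
  (Homega : forall i j, 0 < omega i j < 1 /\
     Feff (Rr j) (p j) (a i) (k i) (omega i j) = 0)
  (i : 'I_n) (x : 'I_n -> 'I_m -> R)
  (Hx : forall l, l != i -> inC (x l)) :
  let F := fun j => Feff (Rr j) (p j) (a i) (k i) in
  let s := fun j => xT x i j in
  let A := fun j => s j < omega i j in
  let inRA := fun y : 'I_m -> R =>
    forall j, A j -> 0 < y j < omega i j - s j in
  let solves := fun y : 'I_m -> R =>
    forall j, A j -> psi (F j) (a i) (y j) (s j) = 0 in
  let V := fun y : 'I_m -> R =>
    \sum_(j < m | A j) (y j `^ a i) * F j (y j + s j) in
  exists y : 'I_m -> R,
    [/\ inRA y, solves y,
        (forall z, inRA z -> solves z -> forall j, A j -> z j = y j) &
        (forall z, inRA z -> V z <= V y)].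
Proof.
move=> F s A inRA solves V.
have s_ge0 j : 0 <= s j.
  by apply: sumr_ge0 => l /Hx[/(_ j)/andP[]].
have root j : exists y, A j -> 0 < y < omega i j - s j /\ psi (F j) (a i) y (s j) = 0.
  have [/andP[_ w_lt1] Fw] := Homega i j; have /andP[a_gt0 _] := Ha i.
  have [Aj|nAj] := boolP (A j); last by exists 0 => Aj; case/negP: nAj.
  have [y y_in psi_y] := psi_root_exists (Hd1 i j) (Hd2 i j) a_gt0 (s_ge0 j) Aj w_lt1 Fw.
  by exists y.
have [y y_root] := choice root.
exists y; split=> [j /y_root[] // | j /y_root[] // | z z_in z_root j Aj | z z_in].
- have [/andP[y_gt0 y_lt] psi_y] := y_root j Aj; have /andP[z_gt0 z_lt] := z_in j Aj.
  have /andP[a_gt0 _] := Ha i; have /andP[_ w_lt1] := (Homega i j).1.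
  apply: (psi_inj (Hd1 i j) (Hd2 i j) a_gt0 (s_ge0 j)); rewrite ?z_root ?psi_y //; lra.
- apply: ler_sum => j Aj; have [/andP[y_gt0 y_lt] psi_y] := y_root j Aj.
  have /andP[z_gt0 z_lt] := z_in j Aj; have /andP[_ w_lt1] := (Homega i j).1.
  apply: (psi_root_argmax (Hd1 i j) (Hd2 i j) (Ha i) (s_ge0 j)); rewrite ?psi_y //; lra.
Qed.
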